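(* Let $Q$ be a commutative noetherian local ring and let $f,g\in Q$ be regular elements of $Q$ such that $(f)\cap(g)=(fg)$. Set $A=Q/(fg)$ and let $x,y\in A$ be the cosets of $f,g$. If $\operatorname{depth} Q>2$, then there exist elements of $A$ that are regular on the $A$-module $A/(x,y)$.
   Context: An element $a\in A$ is regular on a finitely generated $A$-module $M$ if $a$ is a non-unit and multiplication by $a$ on $M$ is injective. *)

From HB Require Import structures.
From mathcomp Require Import all_boot all_order all_algebra.
Set Implicit Arguments. Unset Strict Implicit. Unset Printing Implicit Defensive.
Import GRing.Theory.
Local Open Scope ring_scope.

Definition is_ideal (R : comRingType) (I : R -> Prop) : Prop :=
  [/\ I 0, (forall x y, I x -> I y -> I (x + y)) & (forall r x, I x -> I (r * x))].

Definition proper_ideal (R : comRingType) (I : R -> Prop) : Prop :=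
  is_ideal I /\ ~ I 1.

Definition maximal_ideal (R : comRingType) (I : R -> Prop) : Prop :=
  proper_ideal I /\
  forall J : R -> Prop, proper_ideal J -> (forall x, I x -> J x) -> forall x, J x <-> I x.

Definition local_ring (R : comRingType) : Prop :=
  (exists m : R -> Prop, maximal_ideal m) /\
  forall m m' : R -> Prop, maximal_ideal m -> maximal_ideal m' -> forall x, m x <-> m' x.

Definition ideal_gen (R : comRingType) (s : seq R) (x : R) : Prop :=
  exists c : seq R, size c = size s /\ x = \sum_(i < size s) c`_i * s`_i.

Definition noetherian (R : comRingType) : Prop :=
  forall I : R -> Prop, is_ideal I -> exists s : seq R, forall x, I x <-> ideal_gen s x.

(* a is regular on the R-module R/(s): a is a non-unit and multiplication by a
   on R/(s) is injective, i.e. a*b in (s) implies b in (s). *)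
Definition regular_on_quot (R : comUnitRingType) (s : seq R) (a : R) : Prop :=
  a \isn't a GRing.unit /\ forall b, ideal_gen s (a * b) -> ideal_gen s b.

Definition regular_elt (R : comUnitRingType) (a : R) : Prop :=
  a \isn't a GRing.unit /\ forall b, a * b = 0 -> b = 0.

Definition regular_seq (R : comUnitRingType) (s : seq R) : Prop :=
  (forall i, (i < size s)%N -> regular_on_quot (take i s) s`_i) /\ ~ ideal_gen s 1.

(* depth R > n, depth R being the supremum of lengths of R-regular sequences
   (in the maximal ideal of the local ring R, i.e. of non-units). *)
Definition depth_gt (R : comUnitRingType) (n : nat) : Prop :=
  exists s : seq R, (n < size s)%N /\ regular_seq s.

From Pilot Require Import Defs.
From HB Require Import structures.
From mathcomp Require Import all_boot all_order all_algebra.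
From mathcomp Require Import ring.
From Stdlib Require Import Classical ClassicalEpsilon FunctionalExtensionality PropExtensionality.
Set Implicit Arguments.
Unset Strict Implicit.
Unset Printing Implicit Defensive.
Import GRing.Theory.
Local Open Scope ring_scope.

(* In a noetherian local ring the non-units form the maximal ideal m. For an ideal J, either
   some element of m is regular on Q/J, or m is an associated prime of Q/J ("Q/J has a
   socle"): the zero-divisors on Q/J are covered by the finitely many associated primes, so
   prime avoidance applies. Whether Q/(I,x) has a socle does not depend on the choice of the
   element x of m regular on Q/I. Let z1, z2, z3 be a regular sequence. As f z1 is regular,
   Q/(f z1) has no socle (exchange f z1 for z1 and use z2), which yields w in m regular
   modulo f and modulo z1. A socle of Q/(f,g) would then pass along g -> w, f -> z1, w -> z2
   to Q/(z1,z2), against the regularity of z3. Finally (f) meet (g) = (fg) makes g regular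
   on Q/(f), and A/(x,y) = Q/(f,g). *)

Lemma predext (T : Type) (I J : T -> Prop) : (forall x, I x <-> J x) -> I = J.
Proof.
by move=> IJ; apply: functional_extensionality => x; apply: propositional_extensionality.
Qed.

Lemma covered_pred_listed (T : Type) (X : T -> Prop) (s : seq T) :
  (forall x, X x -> List.In x s) -> exists s', forall x, X x <-> List.In x s'.
Proof.
move=> Xs; pose b x := if excluded_middle_informative (X x) then true else false.
exists (List.filter b s) => x; rewrite List.filter_In /b.
by case: excluded_middle_informative => Xx; split=> [|[]] //; split; first exact: Xs.
Qed.

Section Ideals.
Variable R : comRingType.
Implicit Types (I J : R -> Prop) (s : seq R) (a r x y : R).

Definition ideal_add I a : R -> Prop := fun v => exists i r, I i /\ v = i + r * a.

Lemma ideal_sub I x y : is_ideal I -> I x -> I y -> I (x - y).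
Proof.
case=> _ ID IM Ix Iy; have -> : x - y = x + (-1) * y by ring.
by apply: ID => //; apply: IM.
Qed.

Lemma ideal_mulr I x r : is_ideal I -> I x -> I (x * r).
Proof. by case=> _ _ IM Ix; rewrite mulrC; apply: IM. Qed.

Lemma ideal_add_ideal I a : is_ideal I -> is_ideal (ideal_add I a).
Proof.
case=> I0 ID IM; split.
- by exists 0, 0; split => //; rewrite mul0r addr0.
- move=> _ _ [i [r [Ii ->]]] [j [t [Ij ->]]].
  by exists (i + j), (r + t); split; [apply: ID | ring].
- move=> t _ [i [r [Ii ->]]].
  by exists (t * i), (t * r); split; [apply: IM | ring].
Qed.

Lemma ideal_gen_nil : ideal_gen [::] = (fun x : R => x = 0).
Proof.
apply: predext => x; split; first by case=> c [_ ->]; rewrite big_ord0.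
by move=> ->; exists [::]; rewrite big_ord0.
Qed.

Lemma ideal_gen_cons a s : ideal_gen (a :: s) = ideal_add (ideal_gen s) a.
Proof.
apply: predext => x; split.
  case=> [[|r c]] [//= [c_s ->]]; rewrite big_ord_recl /=.
  by exists (\sum_(i < size s) c`_i * s`_i), r; split; [exists c | rewrite addrC].
case=> _ [r [[c [c_s ->]] ->]]; exists (r :: c); split; first by rewrite /= c_s.
by rewrite big_ord_recl addrC.
Qed.

Lemma ideal_gen1 a x : ideal_gen [:: a] x <-> exists r, x = r * a.
Proof.
rewrite ideal_gen_cons ideal_gen_nil; split; first by case=> _ [r [-> ->]]; exists r; rewrite add0r.
by case=> r ->; exists 0, r; rewrite add0r.
Qed.

Lemma ideal_gen2 a b x : ideal_gen [:: a; b] x <-> exists r t, x = r * a + t * b.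
Proof.
rewrite ideal_gen_cons; split.
  by case=> _ [r [/ideal_gen1 [t ->] ->]]; exists r, t; rewrite addrC.
by case=> r [t ->]; exists (t * b), r; split; [apply/ideal_gen1; exists t | rewrite addrC].
Qed.

Lemma ideal_gen_swap a b : ideal_gen [:: a; b] = ideal_gen [:: b; a].
Proof.
apply: predext => x; rewrite !ideal_gen2.
by split; case=> r [t ->]; exists t, r; rewrite addrC.
Qed.

Lemma ideal_gen_ideal s : is_ideal (ideal_gen s).
Proof.
elim: s => [|a s IHs]; last by rewrite ideal_gen_cons; apply: ideal_add_ideal.
by rewrite ideal_gen_nil; split=> [//|_ _ -> ->|r _ ->]; rewrite ?addr0 ?mulr0.
Qed.

Lemma ideal_gen_min I s x : is_ideal I -> (forall y, y \in s -> I y) -> ideal_gen s x -> I x.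
Proof.
move=> I_ideal; elim: s x => [|a s IHs] x Is; first by rewrite ideal_gen_nil => ->; case: I_ideal.
rewrite ideal_gen_cons => -[i [r [Ii ->]]]; case: (I_ideal) => _ ID IM.
apply: ID; last by apply: IM; apply: Is; rewrite inE eqxx.
by apply: IHs => // y ys; apply: Is; rewrite inE ys orbT.
Qed.

Lemma ideal_gen_mem s y : y \in s -> ideal_gen s y.
Proof.
elim: s => [|a s IHs] //; rewrite inE ideal_gen_cons => /predU1P [->|ys].
  by exists 0, 1; rewrite mul1r add0r; split => //; case: (ideal_gen_ideal s).
by exists y, 0; split; [apply: IHs | rewrite mul0r addr0].
Qed.

End Ideals.

Section Noetherian.
Variable R : comRingType.
Hypothesis R_noeth : noetherian R.

Lemma noetherian_chain (c : nat -> R -> Prop) :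
  (forall n, is_ideal (c n)) -> (forall n x, c n x -> c n.+1 x) ->
  exists N, forall x, c N.+1 x -> c N x.
Proof.
move=> c_ideal c_incr.
have c_mono m n x : (m <= n)%N -> c m x -> c n x.
  by move=> /subnK <-; elim: (n - m)%N => // k IHk cmx; apply/c_incr/IHk.
pose U x := exists n, c n x.
have U_ideal : is_ideal U.
  split; first by exists 0%N; case: (c_ideal 0%N).
    move=> x y [m cmx] [n cny]; exists (maxn m n); case: (c_ideal (maxn m n)) => _ cD _.
    by apply: cD; [apply: c_mono cmx; rewrite leq_maxl | apply: c_mono cny; rewrite leq_maxr].
  by move=> r x [n cnx]; exists n; case: (c_ideal n) => _ _ cM; apply: cM.
have [s Us] := R_noeth U_ideal.
have [N cN] : exists N, forall y, y \in s -> c N y.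
  have : forall y, y \in s -> U y by move=> y /ideal_gen_mem /Us.
  elim: s {Us} => [|a s IHs] Us; first by exists 0%N.
  have [|N cN] := IHs; first by move=> y ys; apply: Us; rewrite inE ys orbT.
  have [n cna] := Us a (mem_head a s).
  exists (maxn N n) => y; rewrite inE => /predU1P [->|ys].
    by apply: c_mono cna; rewrite leq_maxr.
  by apply: c_mono (cN y ys); rewrite leq_maxl.
exists N => x cx; apply: ideal_gen_min (c_ideal N) cN _.
by apply/Us; exists N.+1.
Qed.

Lemma noetherian_maximal (F : (R -> Prop) -> Prop) :
  (forall K, F K -> is_ideal K) -> (exists K, F K) ->
  exists M, F M /\ forall N, F N -> (forall x, M x -> N x) -> N = M.
Proof.
move=> F_ideal [K0 FK0]; apply: NNPP => no_max.
have step (K : {K | F K}) :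
    {N : {K | F K} | (forall x, sval K x -> sval N x) /\ sval N <> sval K}.
  apply: constructive_indefinite_description; apply: NNPP => no_larger.
  apply: no_max; exists (sval K); split=> [|N FN KN]; first exact: svalP.
  by apply: NNPP => NK; apply: no_larger; exists (exist F N FN).
pose c := fix c n := if n is n'.+1 then sval (step (c n')) else exist F K0 FK0.
have [|n x cnx|N cN] := @noetherian_chain (fun n => sval (c n)).
- by move=> n; apply: F_ideal (svalP (c n)).
- exact: (svalP (step (c n))).1.
have [cN_sub cN_neq] := svalP (step (c N)); apply: cN_neq.
by apply: predext => x; split; [apply: cN | apply: cN_sub].
Qed.

End Noetherian.

Section LocalRing.
Variable Q : comUnitRingType.
Hypotheses (Q_noeth : noetherian Q) (Q_local : local_ring Q).
Implicit Types a b : Q.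

Lemma nonunit_maximal a : a \isn't a GRing.unit -> exists M, maximal_ideal M /\ M a.
Proof.
move=> a_nonunit; pose F K := Defs.proper_ideal K /\ K a.
have [|M [[M_proper Ma] M_max]] := @noetherian_maximal Q Q_noeth F (fun K FK => FK.1.1).
  exists (ideal_gen [:: a]); split; last by apply/ideal_gen1; exists 1; rewrite mul1r.
  split; first exact: ideal_gen_ideal.
  case/ideal_gen1 => r r_a; move/negP: a_nonunit; apply; apply/unitrPr.
  by exists r; rewrite mulrC -r_a.
exists M; split=> //; split=> // J J_proper MJ x.
by rewrite (M_max J) //; split=> //; apply: MJ.
Qed.

Lemma nonunitD a b :
  a \isn't a GRing.unit -> b \isn't a GRing.unit -> a + b \isn't a GRing.unit.
Proof.
move=> /nonunit_maximal [M [M_max Ma]] /nonunit_maximal [M' [M'_max M'b]].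
have Mb : M b by apply/(Q_local.2 _ _ M_max M'_max).
case: M_max => [[[_ MD MM] M1] _]; apply/negP => ab_unit; apply: M1.
by rewrite -(mulVr ab_unit); apply: MM; apply: MD.
Qed.

Lemma nonunitB a b :
  a \isn't a GRing.unit -> b \isn't a GRing.unit -> a - b \isn't a GRing.unit.
Proof. by move=> an bn; apply: nonunitD; rewrite ?unitrN. Qed.

Lemma nonunits_ideal : is_ideal (fun a : Q => a \isn't a GRing.unit).
Proof.
split=> [|a b|r a]; [by rewrite unitr0 | exact: nonunitD |].
by rewrite unitrM => /negbTE ->; rewrite andbF.
Qed.

End LocalRing.

Section Primes.
Variable R : comRingType.
Implicit Types (I J P : R -> Prop) (a u v x y : R).

Definition prime_ideal P :=
  [/\ is_ideal P, ~ P 1 & forall a b, P (a * b) -> P a \/ P b].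

Definition colon J v : R -> Prop := fun a => J (a * v).

Definition associated J P := prime_ideal P /\ exists v, P = colon J v.

Lemma prime_ideal_prod P (T : Type) (r : seq T) (C : pred T) (F : T -> R) :
  prime_ideal P -> P (\prod_(i <- r | C i) F i) -> exists2 i, C i & P (F i).
Proof.
case=> _ P1 P_prime P_prod; apply: NNPP => no_factor; move: P_prod.
apply: (big_ind (fun z => ~ P z)) => // [z t Pz Pt /P_prime [] //|i Ci PFi].
by apply: no_factor; exists i.
Qed.

Lemma prime_avoidance n I (P : 'I_n -> R -> Prop) :
  is_ideal I -> (forall i, prime_ideal (P i)) -> (forall x, I x -> exists i, P i x) ->
  exists i, forall x, I x -> P i x.
Proof.
elim: n P => [|n IHn] P I_ideal P_prime I_cover.
  by case: I_ideal => I0 _ _; have [[]] := I_cover 0 I0.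
apply: NNPP => no_sub; case: (I_ideal) => _ ID IM.
have avoid i : exists x, I x /\ forall j, j != i -> ~ P j x.
  apply: NNPP => no_avoid.
  have [|j Ij] := IHn (fun j => P (lift i j)) I_ideal (fun j => P_prime _).
    move=> x Ix; apply: NNPP => not_covered; apply: no_avoid; exists x.
    split=> // j; case: (unliftP i j) => [k -> _ Px|-> /eqP //].
    by apply: not_covered; exists k.
  by apply: no_sub; exists (lift i j).
have [x x_avoid] : exists x : 'I_n.+1 -> R, forall i, I (x i) /\ forall j, j != i -> ~ P j (x i).
  by exists (fun i => sval (constructive_indefinite_description _ (avoid i))) => i;
     exact: proj2_sig (constructive_indefinite_description _ (avoid i)).
have [i0 [Ii0 P0i0]] : exists i0, I i0 /\ ~ P ord0 i0.
  by apply: NNPP => H; apply: no_sub; exists ord0 => z Iz; apply: NNPP => ?; apply: H; exists z.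
(* [y] lies in [I] but in no [P i]: [x ord0] lies in [P ord0] only,
   the product in all the others only. *)
pose y := x ord0 + i0 * \prod_(j | j != ord0) x j.
have [|k Pky] := I_cover y; first by apply: ID; [exact: (x_avoid ord0).1 | exact: ideal_mulr].
have x_in j : P j (x j).
  have [j' Pj'] := I_cover _ (x_avoid j).1.
  by case: (eqVneq j' j) Pj' => [-> // | /(x_avoid j).2].
case: (eqVneq k ord0) Pky => [-> Py|k_ne0 Py].
  have [P0_ideal _ P0_prime] := P_prime ord0.
  have : P ord0 (i0 * \prod_(j | j != ord0) x j).
    rewrite (_ : _ * _ = y - x ord0); last by rewrite /y; ring.
    exact: ideal_sub P0_ideal Py (x_in ord0).
  case/P0_prime => [//|/(prime_ideal_prod (P_prime ord0)) [j j_ne0]].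
  by apply: (x_avoid j).2; rewrite eq_sym.
have [Pk_ideal _ _] := P_prime k.
apply: ((x_avoid ord0).2 k k_ne0); rewrite (_ : x ord0 = y - i0 * \prod_(j | j != ord0) x j).
  apply: (ideal_sub Pk_ideal Py); case: (Pk_ideal) => _ _ PkM; apply: PkM.
  by rewrite (bigD1 k) //; apply: ideal_mulr Pk_ideal (x_in k).
by rewrite /y; ring.
Qed.

Lemma colon_ideal J v : is_ideal J -> is_ideal (colon J v).
Proof.
case=> J0 JD JM; split=> [|x y Jx Jy|r x Jx]; rewrite /colon.
- by rewrite mul0r.
- by rewrite mulrDl; apply: JD.
- by rewrite -mulrA; apply: JM.
Qed.

End Primes.

Section AssociatedPrimes.
Variable R : comRingType.
Hypothesis R_noeth : noetherian R.
Implicit Types (J P : R -> Prop) (a u v x : R).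

Lemma associated_of_zerodivisor J a u :
  is_ideal J -> ~ J u -> J (a * u) -> exists P, associated J P /\ P a.
Proof.
move=> J_ideal Ju Jau; case: (J_ideal) => _ _ JM.
pose F K := exists2 v, ~ J v & K = colon J v /\ forall x, colon J u x -> K x.
have [||K [[v Jv [-> uv]] v_max]] := @noetherian_maximal R R_noeth F.
- by move=> K [v _ [-> _]]; apply: colon_ideal.
- by exists (colon J u), u.
exists (colon J v); split; last exact: uv.
split; last by exists v.
split=> [||x y Jxyv]; [exact: colon_ideal | by rewrite /colon mul1r |].
apply: NNPP => /not_or_and [Jxv Jyv]; apply: Jyv.
have -> : colon J v = colon J (x * v).
  apply: esym; apply: v_max => [|z]; last by rewrite /colon mulrCA; apply: JM.
  exists (x * v) => //; split=> // z /uv Jzv.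
  by rewrite /colon mulrCA; apply: JM.
by rewrite /colon mulrCA mulrA.
Qed.

Lemma associated_add_colon J u P :
  is_ideal J -> prime_ideal (colon J u) -> associated J P ->
  P = colon J u \/ associated (ideal_add J u) P.
Proof.
move=> J_ideal [_ _ Ju_prime] [P_prime [v Pv]]; subst P; case: (J_ideal) => _ JD JM.
have [[r [[j [t [Jj rv]]] Jrv]]|no_r] :=
  classic (exists r, ideal_add J u (r * v) /\ ~ J (r * v)).
  (* [t] avoids [colon J u] and [r] avoids [colon J v], so primality gives both inclusions. *)
  have Jtu : ~ J (t * u) by move=> Jtu; apply: Jrv; rewrite rv; apply: JD.
  left; apply: predext => x; rewrite /colon; split=> Jx.
    have : J (x * t * u).
      rewrite (_ : _ * u = r * (x * v) - x * j); last by rewrite mulrCA rv; ring.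
      by apply: ideal_sub => //; apply: JM.
    by case/Ju_prime.
  have : J (x * r * v).
    rewrite (_ : _ * v = x * j + t * (x * u)); first by apply: JD; apply: JM.
    by rewrite -mulrA rv; ring.
  by case: P_prime => _ _ Pv_prime /Pv_prime [// | /Jrv].
right; split=> //; exists v; apply: predext => x; rewrite /colon; split=> Jxv.
  by exists (x * v), 0; rewrite mul0r addr0.
by apply: NNPP => nJxv; apply: no_r; exists x.
Qed.

Lemma associated_finite J :
  is_ideal J -> exists T, forall P, associated J P <-> List.In P T.
Proof.
suff cover K : is_ideal K -> exists T, forall P, associated K P -> List.In P T.
  by move=> /cover [T T_cover]; apply: covered_pred_listed T_cover.
move: K; apply: NNPP => no_cover.
pose F K := is_ideal K /\ ~ exists T, forall P, associated K P -> List.In P T.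
have [|M [[M_ideal M_uncovered] M_max]] := @noetherian_maximal R R_noeth F (fun K FK => FK.1).
  apply: NNPP => noF; apply: no_cover => K K_ideal.
  by apply: NNPP => HK; apply: noF; exists K.
apply: M_uncovered; have [M1|M1] := classic (M 1).
  by exists [::] => P [[_ P1 _] [v Pv]]; apply: P1; rewrite Pv; apply: ideal_mulr.
have M0 : M (0 * 1) by rewrite mul0r; case: M_ideal.
have [P0 [[Mu_prime [u P0u]] _]] := associated_of_zerodivisor M_ideal M1 M0.
rewrite {P0}P0u in Mu_prime.
have Mu : ~ M u by case: Mu_prime => _; rewrite /colon mul1r.
have [T T_cover] : exists T, forall P, associated (ideal_add M u) P -> List.In P T.
  apply: NNPP => uncovered; apply: Mu.
  have -> : M = ideal_add M u.
    apply: esym; apply: M_max => [|x Mx]; first by split=> //; apply: ideal_add_ideal.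
    by exists x, 0; rewrite mul0r addr0.
  by exists 0, 1; rewrite mul1r add0r; split=> //; case: M_ideal.
exists (colon M u :: T) => P /(associated_add_colon M_ideal Mu_prime) [->|/T_cover].
  by left.
by right.
Qed.

End AssociatedPrimes.

Section Regularity.
Variable Q : comUnitRingType.
Implicit Types (J : Q -> Prop) (s : seq Q) (a b f g u w x y : Q).

Definition regular_mod J a := forall b, J (a * b) -> J b.

(* In a local ring: the maximal ideal kills a nonzero element of [Q/J], i.e. [depth Q/J = 0]. *)
Definition has_socle J := exists2 u, ~ J u & forall a, a \isn't a GRing.unit -> J (a * u).

Lemma regular_on_quot_nil a : regular_on_quot [::] a <-> regular_elt a.
Proof. by rewrite /regular_on_quot ideal_gen_nil. Qed.

Lemma regular_eltM a b : regular_elt a -> regular_elt b -> regular_elt (a * b).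
Proof.
move=> [a_nonunit a_reg] [_ b_reg]; split=> [|c]; last by rewrite -mulrA => /a_reg /b_reg.
by rewrite unitrM negb_and a_nonunit.
Qed.

Lemma regular_on_quot_meet f g :
  regular_elt g -> (forall z, (exists a, z = a * f) -> (exists b, z = b * g) ->
                          exists c, z = c * (f * g)) ->
  regular_on_quot [:: f] g.
Proof.
move=> [g_nonunit g_reg] fg_meet; split=> // u /ideal_gen1 gu_f; apply/ideal_gen1.
have [|c gu] := fg_meet (g * u) gu_f; first by exists u; rewrite mulrC.
by exists c; apply/subr0_eq/g_reg; rewrite mulrBr gu; ring.
Qed.

Lemma regular_on_quot1_mulr a b w :
  regular_elt b -> regular_on_quot [:: a * b] w -> regular_on_quot [:: a] w.
Proof.
move=> [_ b_reg] [w_nonunit w_reg]; split=> // u /ideal_gen1 [c wu]; apply/ideal_gen1.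
have /ideal_gen1 [d ub] : ideal_gen [:: a * b] (u * b).
  by apply: w_reg; apply/ideal_gen1; exists c; rewrite mulrA wu mulrA.
by exists d; apply/subr0_eq/b_reg; rewrite mulrBr mulrC ub; ring.
Qed.

Lemma regular_on_quot1_swap x w :
  regular_elt x -> regular_on_quot [:: x] w -> regular_on_quot [:: w] x.
Proof.
move=> [x_nonunit x_reg] [_ w_reg]; split=> // u /ideal_gen1 [c xu]; apply/ideal_gen1.
have /ideal_gen1 [d cx] : ideal_gen [:: x] c.
  by apply: w_reg; apply/ideal_gen1; exists u; rewrite mulrC -xu mulrC.
by exists d; apply/subr0_eq/x_reg; rewrite mulrBr xu cx; ring.
Qed.

Lemma regular_on_quot_no_socle s a : regular_on_quot s a -> ~ has_socle (ideal_gen s).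
Proof. by move=> [a_nonunit a_reg] [u su]; move/(_ a a_nonunit)/a_reg. Qed.

Lemma has_socle_exchange s x y :
  regular_on_quot s x -> regular_on_quot s y ->
  has_socle (ideal_gen (x :: s)) -> has_socle (ideal_gen (y :: s)).
Proof.
(* If [u] spans a socle of [Q/(I,x)] and [y u = i + r x], then [r] spans one of [Q/(I,y)]. *)
rewrite !ideal_gen_cons => -[_ x_reg] [y_nonunit y_reg] [u xu m_u].
set I := ideal_gen s in x_reg y_reg xu m_u *; have I_ideal : is_ideal I := ideal_gen_ideal s.
case: (I_ideal) => _ ID IM; have [i [r [Ii yu]]] := m_u y y_nonunit.
exists r => [[i' [w [Ii' rw]]] | a a_nonunit].
  apply: xu; exists (u - w * x), w; split; last by ring.
  apply: y_reg; rewrite (_ : y * _ = i + i' * x); first by apply: ID; last apply: ideal_mulr.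
  by rewrite mulrBr yu rw; ring.
have [i2 [t [Ii2 au]]] := m_u a a_nonunit.
exists (a * r - t * y), t; split; last by ring.
apply: x_reg; rewrite (_ : x * _ = y * i2 - a * i); first by apply: (ideal_sub I_ideal); apply: IM.
by transitivity (a * (y * u - i) - y * (a * u - i2)); [rewrite yu au; ring | ring].
Qed.

End Regularity.

Section LocalDepth.
Variable Q : comUnitRingType.
Hypotheses (Q_noeth : noetherian Q) (Q_local : local_ring Q).
Implicit Types (J : Q -> Prop) (a f g : Q).

Lemma regular_or_has_socle J :
  is_ideal J -> (exists a, a \isn't a GRing.unit /\ regular_mod J a) \/ has_socle J.
Proof.
move=> J_ideal.
have [|no_reg] := classic (exists a, a \isn't a GRing.unit /\ regular_mod J a); [by left | right].
have [T T_ass] := associated_finite Q_noeth J_ideal.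
pose P (i : 'I_(length T)) := List.nth i T (fun _ => False).
have P_ass i : associated J (P i) by apply/T_ass/List.nth_In/ltP.
have [|i m_sub] := prime_avoidance (nonunits_ideal Q_noeth Q_local) (fun i => (P_ass i).1).
  move=> a a_nonunit; have [u Ju Jau] : exists2 u, ~ J u & J (a * u).
    apply: NNPP => H; apply: no_reg; exists a; split=> // b Jab.
    by apply: NNPP => Jb; apply: H; exists b.
  have [P0 [/T_ass P0T P0a]] := associated_of_zerodivisor Q_noeth J_ideal Ju Jau.
  have [k [/ltP kT Pk]] := List.In_nth T P0 (fun _ => False) P0T.
  by exists (Ordinal kT); rewrite /P /= Pk.
have [[_ Pi1 _] [v Pv]] := P_ass i.
exists v => [Jv|a /m_sub]; last by rewrite Pv.
by apply: Pi1; rewrite Pv /colon mul1r.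
Qed.

Lemma regular_pair_depth_gt2 f g :
  regular_elt f -> regular_on_quot [:: f] g -> depth_gt Q 2 ->
  exists a, regular_on_quot [:: f; g] a.
Proof.
move=> f_reg g_reg [s [s_size [z_reg _]]].
case: s s_size z_reg => [|z1 [|z2 [|z3 s]]] // _ z_reg.
have /regular_on_quot_nil z1_reg := z_reg 0%N isT.
have z2_reg : regular_on_quot [:: z1] z2 := z_reg 1%N isT.
have z3_reg : regular_on_quot [:: z1; z2] z3 := z_reg 2%N isT.
have [w w_reg] : exists w, regular_on_quot [:: f * z1] w.
  have [[a a_reg]|socle] := regular_or_has_socle (ideal_gen_ideal [:: f * z1]); first by exists a.
  exfalso; apply: regular_on_quot_no_socle z2_reg _; apply: has_socle_exchange socle.
    by apply/regular_on_quot_nil/regular_eltM.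
  exact/regular_on_quot_nil.
have w_reg_f := regular_on_quot1_mulr z1_reg w_reg.
have w_reg_z1 : regular_on_quot [:: z1] w by apply: regular_on_quot1_mulr f_reg _; rewrite mulrC.
have [[a a_reg]|socle] := regular_or_has_socle (ideal_gen_ideal [:: f; g]); first by exists a.
exfalso; apply: regular_on_quot_no_socle z3_reg _.
rewrite ideal_gen_swap; apply: (has_socle_exchange w_reg_z1 z2_reg).
rewrite ideal_gen_swap; apply: (has_socle_exchange (regular_on_quot1_swap f_reg w_reg_f)
                                                   (regular_on_quot1_swap z1_reg w_reg_z1)).
rewrite ideal_gen_swap; apply: (has_socle_exchange g_reg w_reg_f).
by rewrite ideal_gen_swap.
Qed.

End LocalDepth.

Section QuotientMap.
Variables (Q A : comUnitRingType) (pi : {rmorphism Q -> A}).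
Hypothesis pi_surj : forall b : A, exists q, pi q = b.
Implicit Types (s : seq Q) (a q : Q).

Lemma ideal_gen_rmorph s q : ideal_gen s q -> ideal_gen (map pi s) (pi q).
Proof.
elim: s q => [|a s IHs] q /=; first by rewrite !ideal_gen_nil => ->; rewrite rmorph0.
rewrite !ideal_gen_cons => -[i [r [si ->]]].
by exists (pi i), (pi r); split; [apply: IHs | rewrite rmorphD rmorphM].
Qed.

Lemma ideal_gen_rmorph_lift s y :
  ideal_gen (map pi s) y -> exists2 q, ideal_gen s q & pi q = y.
Proof.
elim: s y => [|a s IHs] y /=.
  by rewrite !ideal_gen_nil => ->; exists 0; rewrite ?rmorph0.
rewrite !ideal_gen_cons => -[i [r [/IHs [q sq <-] ->]]]; have [r' <-] := pi_surj r.
by exists (q + r' * a); [exists q, r' | rewrite rmorphD rmorphM].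
Qed.

Lemma regular_on_quot_rmorph s a :
  noetherian Q -> local_ring Q -> (forall q, pi q = 0 -> ideal_gen s q) ->
  regular_on_quot s a -> regular_on_quot (map pi s) (pi a).
Proof.
move=> Q_noeth Q_local ker_s [a_nonunit a_reg]; split=> [|b].
  apply/negP => /unitrPr [b]; have [r <-] := pi_surj b; rewrite -rmorphM => ar1.
  have ar_nonunit : a * r \isn't a GRing.unit by rewrite unitrM negb_and a_nonunit.
  have k_nonunit : a * r - 1 \isn't a GRing.unit.
    by apply/negP => /(rmorph_unit pi); rewrite rmorphB ar1 rmorph1 subrr unitr0.
  have := nonunitB Q_noeth Q_local ar_nonunit k_nonunit.
  by rewrite opprB addrC subrK unitr1.
have [b' <-] := pi_surj b; rewrite -rmorphM => /ideal_gen_rmorph_lift [k sk pik].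
apply/ideal_gen_rmorph/a_reg; rewrite -(subrK k (a * b')).
have [_ sD _] := ideal_gen_ideal s; apply: sD => //; apply: ker_s.
by rewrite rmorphB pik subrr.
Qed.

End QuotientMap.

Theorem lemma2p6 (Q : comUnitRingType) (f g : Q) :
  noetherian Q -> local_ring Q ->
  regular_elt f -> regular_elt g ->
  (forall z : Q, ((exists a, z = a * f) /\ (exists b, z = b * g)) <->
                 (exists c, z = c * (f * g))) ->
  depth_gt Q 2 ->
  forall (A : comUnitRingType) (pi : {rmorphism Q -> A}),
    (forall a : A, exists q : Q, pi q = a) ->
    (forall q : Q, pi q = 0 <-> exists c, q = c * (f * g)) ->
    exists a : A, regular_on_quot [:: pi f; pi g] a.
Proof.
move=> Q_noeth Q_local f_reg g_reg fg_meet Q_depth A pi pi_surj pi_ker.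
have fg_reg : regular_on_quot [:: f] g.
  by apply: regular_on_quot_meet g_reg _ => z zf zg; apply/fg_meet.
have [a a_reg] := regular_pair_depth_gt2 Q_noeth Q_local f_reg fg_reg Q_depth.
exists (pi a); apply: (regular_on_quot_rmorph pi_surj Q_noeth Q_local _ a_reg).
move=> q /pi_ker [c ->]; apply/ideal_gen2.
by exists (c * g), 0; ring.
Qed.
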